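(* Assume $\mathrm{char}(\mathcal{O}/\mathfrak{p})\neq 2$, and let $k,n\ge1$. Let $G$ be a group with $\mathrm{Hei}_{2k+1}(\mathcal{O}/\mathfrak{p}^n)\subseteq G\subseteq \mathbf{U}_{k+2}(\mathcal{O}/\mathfrak{p}^n)$. Then $m_{\mathsf{faithful}}(G)=m_{\mathsf{faithful}}\big(\mathrm{Hei}_{2k+1}(\mathcal{O}/\mathfrak{p}^n)\big)$.
   Context: For a finite group $G$, $m_{\mathsf{faithful}}(G)$ denotes the smallest dimension of a faithful complex representation of $G$. $F$ is a non-Archimedean local field with ring of integers $\mathcal{O}$ and maximal ideal $\mathfrak{p}$. For a commutative unital ring $R$, $\mathbf{U}_{m}(R)\subseteq \mathrm{GL}_m(R)$ is the group of upper unitriangular $m\times m$ matrices, and the Heisenberg group $\mathrm{Hei}_{2k+1}(R)$ is the subgroup of $\mathbf{U}_{k+2}(R)$ consisting of the matrices $\begin{pmatrix}1&\mathbf{x}&z\\0&I_k&\mathbf{y}^T\\0&0&1\end{pmatrix}$ with $\mathbf{x},\mathbf{y}\in R^k$, $z\in R$. *)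

From HB Require Import structures.
From mathcomp Require Import all_boot all_order all_algebra all_fingroup all_solvable all_field all_character.
From Stdlib Require Import ClassicalEpsilon.
Set Implicit Arguments. Unset Strict Implicit. Unset Printing Implicit Defensive.
Import GRing.Theory Num.Theory.
Local Open Scope ring_scope.

(* Finite chain rings = the rings O/p^n (n >= 1) for O the ring of integers of
   a non-Archimedean local field: a finite commutative (nonzero) ring R with a
   non-unit pi such that every non-unit of R is a multiple of pi
   (i.e. R is local with principal maximal ideal pi R; pi is then nilpotent). *)
Definition chain_ring_unif (R : finComUnitRingType) (pi : R) : Prop :=
  pi \isn't a GRing.unit /\
  forall x : R, x \isn't a GRing.unit -> exists y : R, x = pi * y.

Definition Umat (R : finComUnitRingType) (m : nat) : {set {'GL_m.+1[R]}} :=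
  [set g : {'GL_m.+1[R]} | [forall i : 'I_m.+1, forall j : 'I_m.+1,
      ((j < i)%N ==> (GLval g i j == 0)) && ((i == j) ==> (GLval g i j == 1))]].

(* Hei_{2k+1}(R) inside U_{k+2}(R): unitriangular matrices whose only
   off-diagonal nonzero entries lie in the first row or the last column. *)
Definition Hei (R : finComUnitRingType) (k : nat) : {set {'GL_k.+2[R]}} :=
  [set g in Umat R k.+1 | [forall i : 'I_k.+2, forall j : 'I_k.+2,
      [&& (i < j)%N, (0 < i)%N & (j < k.+1)%N] ==> (GLval g i j == 0)]].

Definition has_faithful_rep (gT : finGroupType) (G : {group gT}) (n : nat) : Prop :=
  exists rG : mx_representation algC G n, mx_faithful rG.

Definition has_faithful_repb (gT : finGroupType) (G : {group gT}) (n : nat) : bool :=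
  if excluded_middle_informative (has_faithful_rep G n) then true else false.

Lemma has_faithful_repb_ex (gT : finGroupType) (G : {group gT}) :
  exists n, has_faithful_repb G n.
Proof.
exists #|G|; rewrite /has_faithful_repb.
case: excluded_middle_informative => // [[]].
by exists (regular_repr algC G); exact: regular_mx_faithful.
Qed.

Definition m_faithful (gT : finGroupType) (G : {group gT}) : nat :=
  ex_minn (has_faithful_repb_ex G).

From HB Require Import structures.
From mathcomp Require Import all_boot all_order all_algebra all_fingroup all_solvable all_field all_character.
From mathcomp Require Import zify.
From Stdlib Require Import ClassicalEpsilon.
Set Implicit Arguments. Unset Strict Implicit. Unset Printing Implicit Defensive.
Import Order.TTheory GRing.Theory Num.Theory.
Local Open Scope ring_scope.

(* Let Z = {1 + s e_0 e_l^T} be the centre of Hei and B = {1 + v e_l^T : v_l = 0}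
   its abelian normal subgroup of last-column matrices.  Commutators with the
   first-row elements of Hei show that every nontrivial normal subgroup of an
   overgroup G of Hei inside U meets Z, so a character of G is faithful as soon
   as its kernel meets Z trivially.  By Clifford theory, an irreducible
   constituent chi of a faithful representation of Hei restricts to B as a
   multiple of an Hei-orbit of linear characters, all agreeing on Z with one
   additive character psi of R.  The g in G whose inner first-row entries are
   killed by psi form a subgroup C containing the inertia group in Hei, on which
   g |-> psi(g_{0,l}) is a linear character lambda; as G = C Hei,
   [G : C] = [Hei : Hei /\ C] <= chi(1).  Summing Ind_C^G lambda over the
   constituents gives a character of degree at most that of the representation,
   whose kernel meets Z trivially, hence faithful. *)

Lemma unitrD1_sqr0 (T : unitRingType) (N : T) : N * N = 0 -> 1 + N \is a GRing.unit.
Proof.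
move=> NN; apply/unitrP; exists (1 - N); split.
  by rewrite mulrDr !mulrBl !mulr1 !mul1r NN subr0 addrNK.
by rewrite mulrBr !mulrDl !mulr1 !mul1r NN addr0 addrK.
Qed.

Lemma cfker_sum_char (gT : finGroupType) (G : {group gT}) (I : finType) (P : pred I)
    (Phi : I -> 'CF(G)) x :
  (forall i, P i -> Phi i \is a character) ->
  x \in cfker (\sum_(i | P i) Phi i) -> forall i, P i -> x \in cfker (Phi i).
Proof.
move=> Nc Kx i Pi.
have Nsum : (\sum_(i | P i) Phi i) \is a character by apply: rpred_sum.
move: Kx; rewrite !cfkerEchar ?Nc // !inE => /andP[Gx /eqP]; rewrite !sum_cfunE => Heq.
rewrite Gx /=; apply/eqP; apply: (normC_sum_upper _ Heq) => // j Pj.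
exact: char1_ge_norm (Nc j Pj).
Qed.

Section FaithfulDimension.
Variables (gT : finGroupType) (G : {group gT}).

Lemma m_faithful_min n : has_faithful_rep G n -> (m_faithful G <= n)%N.
Proof.
rewrite /m_faithful; case: ex_minnP => m _ min h; apply: min.
by rewrite /has_faithful_repb; case: excluded_middle_informative.
Qed.

Lemma m_faithfulP : has_faithful_rep G (m_faithful G).
Proof.
rewrite /m_faithful; case: ex_minnP => m Pm _; move: Pm.
by rewrite /has_faithful_repb; case: excluded_middle_informative.
Qed.

Lemma has_faithful_rep_sub (H : {group gT}) n :
  H \subset G -> has_faithful_rep G n -> has_faithful_rep H n.
Proof.
move=> sHG [r fr].
have rH : mx_repr H r.
  split; first exact: repr_mx1.
  by move=> x y Hx Hy; apply: repr_mxM; apply: (subsetP sHG).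
exists (MxRepresentation rH); apply: subset_trans fr.
apply/subsetP=> x /rkerP[Hx rx]; apply/rkerP; split => //.
exact: (subsetP sHG).
Qed.

(* Padding with copies of the trivial character does not enlarge the kernel. *)
Lemma has_faithful_rep_char (theta : 'CF(G)) (d : nat) :
  theta \is a character -> (cfker theta \subset [1 gT])%g -> theta 1%g <= d%:R ->
  has_faithful_rep G d.
Proof.
move=> Ntheta Ktheta; have [m Dm] := natrP (Cnat_char1 Ntheta).
rewrite Dm ler_nat => le_md.
pose Phi (c : bool) : 'CF(G) := if c then theta else (1 : 'CF(G)) *+ (d - m).
have NPhi c : predT c -> Phi c \is a character.
  by case: c => _; rewrite /Phi ?Ntheta // rpredMn // cfun1_char.
have /char_reprP[[m' r] /= Dr] : \sum_c Phi c \is a character by apply: rpred_sum.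
have m'd : m' = d.
  apply/eqP; rewrite -(eqr_nat algC) -(cfRepr1 r) -Dr sum_cfunE big_bool /=.
  by rewrite muln_cfunE cfun11 Dm -natrD subnKC.
subst m'; exists r; rewrite /mx_faithful -cfker_repr -Dr.
apply: subset_trans Ktheta; apply/subsetP=> x Kx.
exact: (cfker_sum_char NPhi Kx (isT : predT true)).
Qed.

End FaithfulDimension.

Section UnitriangularMatrices.
Variables (R : finComUnitRingType) (k : nat).
Local Notation n := k.+2.
Local Notation gT := {'GL_n[R]}.
Local Notation U := (Umat R k.+1).

Definition i0 : 'I_n := ord0.
Definition il : 'I_n := ord_max.
Definition ecol (i : 'I_n) : 'cV[R]_n := delta_mx i 0.
Definition erow (j : 'I_n) : 'rV[R]_n := delta_mx 0 j.
Local Notation e0 := (ecol i0).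
Local Notation el := (erow il).

(* Junk value 1 unless 1 + N is invertible, which holds when N^2 = 0. *)
Definition unip (N : 'M[R]_n) : gT := insubd (1%g : gT) (1 + N).

Definition lastcol (v : 'cV[R]_n) : gT := unip (v *m el).
Definition firstrow (a : 'rV[R]_n) : gT := unip (e0 *m a).
Definition central (s : R) : gT := lastcol (s *: e0).

Lemma unipE N : N *m N = 0 -> GLval (unip N) = 1 + N.
Proof. by move=> NN; rewrite /unip insubdK //; apply: unitrD1_sqr0; rewrite -mulmxE. Qed.

Lemma GLval_inj : injective (@GLval n R).
Proof. exact: val_inj. Qed.

Lemma il_neq0 : il != i0.
Proof. by rewrite -val_eqE. Qed.

Lemma mulmx_col (p : nat) (X : 'M[R]_(p, n)) i j : (X *m ecol j) i 0 = X i j.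
Proof. by rewrite /ecol -colE mxE. Qed.

Lemma mulmx_row (p : nat) (X : 'M[R]_(n, p)) i j : (erow i *m X) 0 j = X i j.
Proof. by rewrite /erow -rowE mxE. Qed.

Lemma el_e0 : el *m e0 = 0.
Proof.
by apply/matrixP=> a b; rewrite (ord1 a) (ord1 b) mulmx_row !mxE (negbTE il_neq0).
Qed.

Lemma el_mulmx (v : 'cV[R]_n) : v il 0 = 0 -> el *m v = 0.
Proof.
by move=> v0; apply/matrixP=> i j; rewrite (ord1 i) (ord1 j) mulmx_row v0 mxE.
Qed.

Lemma mulmx_e0 (a : 'rV[R]_n) : a 0 i0 = 0 -> a *m e0 = 0.
Proof.
by move=> a0; apply/matrixP=> i j; rewrite (ord1 i) (ord1 j) mulmx_col a0 mxE.
Qed.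

Lemma e0Z_il s : (s *: e0) il 0 = 0.
Proof. by rewrite !mxE (negbTE il_neq0) mulr0. Qed.

Lemma lastcolE (v : 'cV[R]_n) : v il 0 = 0 -> GLval (lastcol v) = 1 + v *m el.
Proof. by move=> v0; rewrite unipE // mulmxA -(mulmxA v) el_mulmx // mulmx0 mul0mx. Qed.

Lemma firstrowE (a : 'rV[R]_n) : a 0 i0 = 0 -> GLval (firstrow a) = 1 + e0 *m a.
Proof. by move=> a0; rewrite unipE // mulmxA -(mulmxA e0) mulmx_e0 // mulmx0 mul0mx. Qed.

Lemma lastcol_entry (v : 'cV[R]_n) i j :
  ((1 + v *m el) : 'M[R]_n) i j = (i == j)%:R + v i 0 * (j == il)%:R.
Proof. by rewrite !mxE big_ord1 !mxE. Qed.

Lemma firstrow_entry (a : 'rV[R]_n) i j :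
  ((1 + e0 *m a) : 'M[R]_n) i j = (i == j)%:R + (i == i0)%:R * a 0 j.
Proof. by rewrite !mxE big_ord1 !mxE andbT. Qed.

Lemma centralE s : GLval (central s) = 1 + s *: (e0 *m el).
Proof. by rewrite lastcolE ?e0Z_il // scalemxAl. Qed.

Lemma central_corner s : GLval (central s) i0 il = s.
Proof.
by rewrite centralE !mxE big_ord1 !mxE eq_sym (negbTE il_neq0) !eqxx /= !mulr1 add0r.
Qed.

Lemma lastcolD (v w : 'cV[R]_n) : v il 0 = 0 -> w il 0 = 0 ->
  (lastcol v * lastcol w)%g = lastcol (v + w).
Proof.
move=> v0 w0; apply: GLval_inj.
have vw0 : (v + w) il 0 = 0 by rewrite mxE v0 w0 addr0.
rewrite GL_MxE !lastcolE // mulmxDr mulmx1 mulmxDl mul1mx mulmxA -(mulmxA v).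
by rewrite el_mulmx // mulmx0 mul0mx addr0 mulmxDl addrA.
Qed.

Lemma firstrowD (a c : 'rV[R]_n) : a 0 i0 = 0 -> c 0 i0 = 0 ->
  (firstrow a * firstrow c)%g = firstrow (a + c).
Proof.
move=> a0 c0; apply: GLval_inj.
have ac0 : (a + c) 0 i0 = 0 by rewrite mxE a0 c0 addr0.
rewrite GL_MxE !firstrowE // mulmxDr mulmx1 mulmxDl mul1mx -(mulmxA e0 a) (mulmxA a).
by rewrite mulmx_e0 // mul0mx mulmx0 addr0 mulmxDr addrA.
Qed.

Lemma lastcol0 : lastcol 0 = 1%g.
Proof. by apply: GLval_inj; rewrite lastcolE ?mxE // mul0mx addr0. Qed.

Lemma firstrow0 : firstrow 0 = 1%g.
Proof. by apply: GLval_inj; rewrite firstrowE ?mxE // mulmx0 addr0. Qed.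

Lemma lastcolN (v : 'cV[R]_n) : v il 0 = 0 -> lastcol (- v) = (lastcol v)^-1%g.
Proof.
move=> v0; apply/eqP; rewrite eq_sym eq_invg_mul lastcolD ?mxE ?v0 ?oppr0 //.
by rewrite subrr lastcol0.
Qed.

Lemma centralD s t : (central s * central t)%g = central (s + t).
Proof. by rewrite /central lastcolD ?e0Z_il // scalerDl. Qed.

Lemma central0 : central 0 = 1%g.
Proof. by rewrite /central scale0r lastcol0. Qed.

Lemma firstrow_lastcol (a : 'rV[R]_n) (v : 'cV[R]_n) : a 0 i0 = 0 -> v il 0 = 0 ->
  (firstrow a * lastcol v = central ((a *m v) 0 0) * (lastcol v * firstrow a))%g.
Proof.
move=> a0 v0; apply: GLval_inj; rewrite !GL_MxE centralE !lastcolE // !firstrowE //.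
set s := (a *m v) 0 0.
have vaE : (1 + v *m el) *m (1 + e0 *m a) = 1 + e0 *m a + v *m el.
  rewrite mulmxDr mulmx1 mulmxDl mul1mx -(mulmxA v) (mulmxA el) el_e0.
  by rewrite mul0mx mulmx0 addr0 addrAC.
have el_va : el *m (1 + e0 *m a + v *m el) = el.
  by rewrite !mulmxDr mulmx1 !mulmxA el_e0 el_mulmx // !mul0mx !addr0.
have avE : (1 + e0 *m a) *m (1 + v *m el) = 1 + e0 *m a + v *m el + s *: (e0 *m el).
  rewrite mulmxDr mulmx1 mulmxDl mul1mx -mulmxA (mulmxA a v) [a *m v]mx11_scalar.
  by rewrite mul_scalar_mx -scalemxAr addrA.
by rewrite avE vaE mulmxDl mul1mx -scalemxAl -mulmxA el_va.
Qed.

Lemma UmatP g : g \in U ->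
  (forall i j : 'I_n, (j < i)%N -> GLval g i j = 0) /\ (forall i, GLval g i i = 1).
Proof.
rewrite inE => /forallP Hg; split=> [i j lt_ji | i].
  by have /forallP/(_ j)/andP[/implyP/(_ lt_ji)/eqP] := Hg i.
by have /forallP/(_ i)/andP[_ /implyP/(_ (eqxx i))/eqP] := Hg i.
Qed.

Lemma el_Umat g : g \in U -> el *m GLval g = el.
Proof.
case/UmatP=> Hl Hd; apply/rowP=> j; rewrite mulmx_row !mxE eqxx /=.
have [->|ne] := eqVneq j il; first by rewrite Hd.
by rewrite Hl //; move: ne (ltn_ord j); rewrite -val_eqE /il /=; lia.
Qed.

Lemma Umat_e0 g : g \in U -> GLval g *m e0 = e0.
Proof.
case/UmatP=> Hl Hd; apply/colP=> i; rewrite mulmx_col !mxE eqxx andbT.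
by have [->|ne] := eqVneq i i0; [rewrite Hd | rewrite Hl // lt0n].
Qed.

Lemma Umat_last (g : gT) (v : 'cV[R]_n) : g \in U -> v il 0 = 0 ->
  (GLval g *m v) il 0 = 0.
Proof. by move=> Ug v0; rewrite -mulmx_row mulmxA el_Umat // mulmx_row. Qed.

Lemma Umat_lastcol g (v : 'cV[R]_n) : g \in U -> v il 0 = 0 ->
  (g * lastcol v = lastcol (GLval g *m v) * g)%g.
Proof.
move=> Ug v0; apply: GLval_inj; rewrite !GL_MxE !lastcolE ?Umat_last //.
by rewrite mulmxDr mulmx1 mulmxDl mul1mx -(mulmxA _ el) el_Umat // mulmxA.
Qed.

Lemma central_Umat g s : g \in U -> (g * central s = central s * g)%g.
Proof. by move=> Ug; rewrite Umat_lastcol ?e0Z_il // -scalemxAr Umat_e0. Qed.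

Lemma Umat_lastcolE (g : gT) : g \in U ->
    (forall j, j != il -> GLval g *m ecol j = ecol j) ->
  g = lastcol (GLval g *m ecol il - ecol il).
Proof.
move=> Ug Hc; apply: GLval_inj.
have c0 : (GLval g *m ecol il - ecol il) il 0 = 0.
  by rewrite mxE mulmx_col (UmatP Ug).2 !mxE !eqxx subrr.
rewrite lastcolE //; apply/matrixP=> i j.
rewrite lastcol_entry mxE mulmx_col !mxE eqxx andbT.
have [->|ne] := eqVneq j il; first by rewrite mulr1 addrCA subrr addr0.
by rewrite /= mulr0 addr0 -mulmx_col Hc // mxE andbT.
Qed.

Lemma ordP (l : 'I_n) : [\/ l = i0, l = il | (0 < l)%N && (l < k.+1)%N].
Proof.
have := ltn_ord l; case: l => [[|m] lm] /=.
  by move=> _; constructor 1; apply: val_inj.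
rewrite ltnS leq_eqVlt => /orP[/eqP em|lt].
  by constructor 2; apply: val_inj => /=; rewrite em.
by constructor 3.
Qed.

Lemma lastcol_Hei (v : 'cV[R]_n) : v il 0 = 0 -> lastcol v \in Hei R k.
Proof.
move=> v0; rewrite !inE; apply/andP; split; apply/forallP=> i; apply/forallP=> j;
  rewrite lastcolE // lastcol_entry.
  apply/andP; split; apply/implyP=> h.
    have -> : (i == j) = false by apply/eqP=> ij; rewrite ij ltnn in h.
    have -> : (j == il) = false.
      by apply/negbTE; rewrite -val_eqE /=; move: (ltn_ord i) => /=; lia.
    by rewrite mulr0 addr0.
  rewrite h; move/eqP: h => <-.
  by have [->|_] := eqVneq i il; rewrite ?v0 ?mul0r ?mulr0 addr0.
apply/implyP=> /and3P[h1 h2 h3].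
have -> : (i == j) = false by apply/negbTE; rewrite -val_eqE /=; lia.
have -> : (j == il) = false by apply/negbTE; rewrite -val_eqE /=; lia.
by rewrite mulr0 addr0.
Qed.

Lemma firstrow_Hei (a : 'rV[R]_n) : a 0 i0 = 0 -> firstrow a \in Hei R k.
Proof.
move=> a0; rewrite !inE; apply/andP; split; apply/forallP=> i; apply/forallP=> j;
  rewrite firstrowE // firstrow_entry.
  apply/andP; split; apply/implyP=> h.
    have -> : (i == j) = false by apply/eqP=> ij; rewrite ij ltnn in h.
    have -> : (i == i0) = false by apply/negbTE; rewrite -val_eqE /=; lia.
    by rewrite mul0r addr0.
  rewrite h; move/eqP: h => <-.
  by have [->|_] := eqVneq i i0; rewrite ?a0 ?mulr0 ?mul0r addr0.
apply/implyP=> /and3P[h1 h2 h3].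
have -> : (i == j) = false by apply/negbTE; rewrite -val_eqE /=; lia.
have -> : (i == i0) = false by apply/negbTE; rewrite -val_eqE /=; lia.
by rewrite mul0r addr0.
Qed.

End UnitriangularMatrices.

Arguments i0 {k}.
Arguments il {k}.
Arguments ecol {R k}.
Arguments erow {R k}.
Arguments central {R k}.
Arguments il_neq0 {k}.
Arguments e0Z_il {R k}.
Arguments central_corner {R} k.

Section HeisenbergOvergroup.
Variables (R : finComUnitRingType) (k : nat).
Local Notation n := k.+2.
Local Notation gT := {'GL_n[R]}.
Local Notation U := (Umat R k.+1).
Local Notation e0 := (ecol i0).

Variables (G H : {group gT}).
Hypotheses (hH : H :=: Hei R k) (hHG : H \subset G) (hGU : G \subset U).

Lemma lastcol_in (v : 'cV[R]_n) : v il 0 = 0 -> lastcol v \in G.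
Proof. by move=> v0; apply: (subsetP hHG); rewrite hH lastcol_Hei. Qed.

Lemma firstrow_in (a : 'rV[R]_n) : a 0 i0 = 0 -> firstrow a \in G.
Proof. by move=> a0; apply: (subsetP hHG); rewrite hH firstrow_Hei. Qed.

Lemma Hei_Umat : H \subset U.
Proof. exact: subset_trans hHG hGU. Qed.

Section NormalSubgroup.
Variable K : {group gT}.
Hypotheses (nKG : (K <| G)%g) (KZ1 : forall s, central s \in K -> s = 0).

Lemma conjg_normal x y : x \in G -> y \in K -> (x * y * x^-1)%g \in K.
Proof.
move=> Gx Ky; have [_ /subsetP nK] := andP nKG.
have : (y ^ x^-1)%g \in K by rewrite memJ_norm // groupV nK.
by rewrite conjgE invgK mulgA.
Qed.

(* Commutators with first-row elements push a last-column element of K into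
   the centre, where K is trivial. *)
Lemma lastcol_normal (v : 'cV[R]_n) : v il 0 = 0 -> lastcol v \in K -> v = 0.
Proof.
move=> v0 Kv.
have v_off0 (j : 'I_n) : j != i0 -> v j 0 = 0.
  move=> nj; have a0 : (erow j : 'rV[R]_n) 0 i0 = 0 by rewrite mxE eq_sym (negbTE nj) andbF.
  rewrite -mulmx_row; apply: KZ1.
  have -> : central ((erow j *m v) 0 0) =
      (firstrow (erow j) * lastcol v * (lastcol v * firstrow (erow j))^-1)%g.
    by rewrite firstrow_lastcol // mulgK.
  by rewrite invMg mulgA groupM ?groupV // conjg_normal // firstrow_in.
have vE : v = v i0 0 *: e0.
  apply/matrixP=> i j; rewrite (ord1 j) !mxE andbT.
  by have [->|ni] := eqVneq i i0; rewrite ?mulr1 // mulr0 v_off0.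
by move: Kv; rewrite vE => /KZ1 ->; rewrite scale0r.
Qed.

(* Conjugating the last-column elements shows that each g in K fixes e_j for
   j < l, so g is itself a last-column element. *)
Lemma normal_trivial : (K \subset [1 gT])%g.
Proof.
apply/subsetP=> g Kg; rewrite inE; apply/eqP.
have Gg : g \in G by apply: (subsetP (normal_sub nKG)).
have Ug : g \in U by apply: (subsetP hGU).
have col_fixed : forall j, j != il -> GLval g *m ecol j = ecol j.
  move=> j nj; have u0 : (ecol j : 'cV[R]_n) il 0 = 0 by rewrite mxE andbT eq_sym (negbTE nj).
  apply/eqP; rewrite -subr_eq0; apply/eqP; apply: lastcol_normal.
    by rewrite mxE Umat_last // mxE u0 oppr0 addr0.
  have Nu0 : (- ecol j : 'cV[R]_n) il 0 = 0 by rewrite mxE u0 oppr0.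
  rewrite -lastcolD ?Umat_last // lastcolN //.
  have -> : lastcol (GLval g *m ecol j) = (g * lastcol (ecol j) * g^-1)%g.
    by rewrite Umat_lastcol // mulgK.
  by rewrite -!mulgA groupM // mulgA conjg_normal ?groupV // lastcol_in.
rewrite (Umat_lastcolE Ug col_fixed); have -> : GLval g *m ecol il - ecol il = 0.
  apply: lastcol_normal; first by rewrite mxE mulmx_col (UmatP Ug).2 !mxE !eqxx subrr.
  by rewrite -(Umat_lastcolE Ug col_fixed).
by rewrite lastcol0.
Qed.

End NormalSubgroup.

Definition Blast : {set gT} :=
  [set g in H | [forall j : 'I_n, (j != il) ==> (GLval g *m ecol j == ecol j)]].

Lemma group_set_Blast : group_set Blast.
Proof.
apply/group_setP; split.
  by rewrite inE group1; apply/forallP=> j; rewrite GL_1E mul1mx eqxx implybT.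
move=> x y /setIdP[Hx /forallP Cx] /setIdP[Hy /forallP Cy].
rewrite inE groupM //; apply/forallP=> j; apply/implyP=> nj.
rewrite GL_MxE -mulmxA (eqP (implyP (Cy j) nj)).
exact: (implyP (Cx j) nj).
Qed.

Canonical Blast_group := Group group_set_Blast.

Lemma lastcol_Blast (v : 'cV[R]_n) : v il 0 = 0 -> lastcol v \in Blast.
Proof.
move=> v0; rewrite inE hH lastcol_Hei //; apply/forallP=> j; apply/implyP=> nj.
rewrite lastcolE // mulmxDl mul1mx -mulmxA el_mulmx ?mulmx0 ?addr0 //.
by rewrite mxE andbT eq_sym (negbTE nj).
Qed.

Lemma BlastP g : g \in Blast -> exists2 v : 'cV[R]_n, v il 0 = 0 & g = lastcol v.
Proof.
case/setIdP=> Hg /forallP Cg; have Ug : g \in U by apply: (subsetP Hei_Umat).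
exists (GLval g *m ecol il - ecol il).
  by rewrite mxE mulmx_col (UmatP Ug).2 !mxE !eqxx subrr.
by apply: Umat_lastcolE => // j nj; apply/eqP; exact: (implyP (Cg j) nj).
Qed.

Lemma Blast_sub : Blast \subset H.
Proof. by apply/subsetP=> g /setIdP[]. Qed.

Lemma Blast_abelian : abelian Blast.
Proof.
apply/centsP=> x /BlastP[v v0 ->] y /BlastP[w w0 ->].
by rewrite /commute !lastcolD // addrC.
Qed.

Lemma Blast_normal : (Blast <| H)%g.
Proof.
rewrite /normal Blast_sub /=; apply/subsetP=> h Hh; rewrite inE.
apply/subsetP=> y /imsetP[b /BlastP[v v0 ->] ->].
have Uh : h^-1%g \in U by apply: (subsetP Hei_Umat); rewrite groupV.
rewrite conjgE mulgA Umat_lastcol // -mulgA mulVg mulg1 lastcol_Blast //.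
exact: Umat_last.
Qed.

Lemma central_Blast s : central s \in Blast.
Proof. by rewrite lastcol_Blast ?e0Z_il. Qed.

Lemma Blast_linear (b : Iirr Blast) : 'chi[Blast]_b \is a linear_char.
Proof. by move/char_abelianP: Blast_abelian. Qed.

Definition zchar (b : Iirr Blast) (s : R) : algC := 'chi[Blast]_b (central s).

Lemma zcharD b s t : zchar b (s + t) = zchar b s * zchar b t.
Proof. by rewrite /zchar -centralD lin_charM ?central_Blast ?Blast_linear. Qed.

Lemma zchar0 b : zchar b 0 = 1.
Proof. by rewrite /zchar central0 lin_char1 ?Blast_linear. Qed.

Lemma zchar_sum b (I : finType) (P : pred I) (f : I -> R) :
  zchar b (\sum_(i | P i) f i) = \prod_(i | P i) zchar b (f i).
Proof. exact: (big_morph _ (zcharD b) (zchar0 b)). Qed.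

Lemma GL_mulE (x y : gT) i j : GLval (x * y)%g i j = \sum_l GLval x i l * GLval y l j.
Proof. by rewrite GL_MxE mxE. Qed.

(* The elements of G whose inner first-row entries generate an ideal killed by
   zchar b. *)
Definition Cpsi (b : Iirr Blast) : {set gT} :=
  [set g in G | [forall j : 'I_n, ((0 < j)%N && (j < k.+1)%N) ==>
     [forall r : R, zchar b (GLval g i0 j * r) == 1]]].

Lemma CpsiP b g : reflect (g \in G /\ forall (j : 'I_n) r,
    (0 < j)%N -> (j < k.+1)%N -> zchar b (GLval g i0 j * r) = 1) (g \in Cpsi b).
Proof.
apply: (iffP setIdP) => [[Gg /forallP Cg] | [Gg Cg]]; split=> //.
  move=> j r j0 jk.
  by have /implyP/(_ (introT andP (conj j0 jk)))/forallP/(_ r)/eqP := Cg j.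
apply/forallP=> j; apply/implyP=> /andP[j0 jk]; apply/forallP=> r.
by rewrite Cg.
Qed.

Lemma group_set_Cpsi b : group_set (Cpsi b).
Proof.
apply/group_setP; split.
  apply/CpsiP; split=> // j r j0 _; rewrite GL_1E mxE.
  by rewrite (_ : i0 == j = false) ?mul0r ?zchar0 //; apply/negbTE; rewrite -val_eqE /=; lia.
move=> x y /CpsiP[Gx Cx] /CpsiP[Gy Cy].
have Ux : x \in U by apply: (subsetP hGU).
have Uy : y \in U by apply: (subsetP hGU).
apply/CpsiP; split=> [|j r j0 jk]; first exact: groupM.
rewrite GL_mulE mulr_suml zchar_sum; apply: big1 => l _.
case: (ordP l) => [->|->|/andP[l0 lk]].
- by rewrite (UmatP Ux).2 mul1r Cy.
- by rewrite (UmatP Uy).1 ?mulr0 ?mul0r ?zchar0 // (ltn_trans jk).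
- by rewrite -mulrA Cx.
Qed.

Canonical Cpsi_group b := Group (group_set_Cpsi b).

Lemma Cpsi_sub b : Cpsi b \subset G.
Proof. by apply/subsetP=> g /setIdP[]. Qed.

Definition lambda_mx (b : Iirr Blast) (g : gT) : 'M[algC]_1 :=
  (zchar b (GLval g i0 il))%:M.

(* The corner entry of a product picks up only inner first-row entries of the
   left factor, which zchar b kills. *)
Lemma lambda_mx_repr b : mx_repr (Cpsi b) (lambda_mx b).
Proof.
split; first by rewrite /lambda_mx GL_1E mxE eq_sym (negbTE il_neq0) zchar0.
move=> x y /CpsiP[Gx Cx] /CpsiP[Gy Cy].
have Ux : x \in U by apply: (subsetP hGU).
have Uy : y \in U by apply: (subsetP hGU).
rewrite /lambda_mx -scalar_mxM; congr (_%:M).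
rewrite GL_mulE zchar_sum (bigD1 i0) // (bigD1 il) //= big1 => [|l /andP[nl0 nl]].
  by rewrite (UmatP Ux).2 (UmatP Uy).2 mul1r mulr1 mulr1 mulrC.
case: (ordP l) => [l0|l1|/andP[l0 lk]]; last exact: Cx.
- by rewrite l0 eqxx in nl0.
- by rewrite l1 eqxx in nl.
Qed.

Definition lambda b : 'CF(Cpsi b) := cfRepr (MxRepresentation (lambda_mx_repr b)).

Lemma lambdaE b c : c \in Cpsi b -> lambda b c = zchar b (GLval c i0 il).
Proof. by move=> Cc; rewrite cfunE Cc mulr1n /= mxtrace_scalar. Qed.

Lemma lambda_char b : lambda b \is a character.
Proof. exact: cfRepr_char. Qed.

Lemma lambda1 b : lambda b 1%g = 1.
Proof. exact: cfRepr1. Qed.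

Lemma lambda_neq0 b : lambda b != 0.
Proof.
apply/eqP=> h; have := congr1 (fun f : 'CF(_) => f 1%g) h.
by rewrite lambda1 cfunE => /eqP; rewrite oner_eq0.
Qed.

Lemma Hei_inner (h : gT) (i j : 'I_n) : h \in H -> (0 < i)%N -> (i < j)%N ->
  (j < k.+1)%N -> GLval h i j = 0.
Proof.
rewrite hH inE => /andP[_ /forallP Hh] i_gt0 lt_ij jk.
by have /forallP/(_ j)/implyP/(_ (introT and3P (And3 lt_ij i_gt0 jk)))/eqP := Hh i.
Qed.

Lemma Hei_col (h : gT) (j : 'I_n) : h \in H -> (0 < j)%N -> (j < k.+1)%N ->
  GLval h *m ecol j = ecol j + GLval h i0 j *: e0.
Proof.
move=> Hh j0 jk; have Uh : h \in U by apply: (subsetP Hei_Umat).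
apply/matrixP=> i c; rewrite (ord1 c) mulmx_col !mxE !andbT.
case: (ordP i) => [->|->|/andP[i0' ik]].
- by rewrite (_ : i0 == j = false) ?eqxx ?mulr1 ?add0r //; apply/negbTE; rewrite -val_eqE /=; lia.
- rewrite ((UmatP Uh).1 il j) //.
  have -> : (il == j) = false by apply/negbTE; rewrite -val_eqE /=; lia.
  by rewrite ?(negbTE il_neq0) /= ?mulr0 ?addr0.
rewrite (_ : i == i0 = false) ?mulr0 ?addr0; last by apply/negbTE; rewrite -val_eqE /=; lia.
have [->|nij] := eqVneq i j; first by rewrite (UmatP Uh).2.
have [lt|le] := ltnP i j.
  by rewrite Hei_inner.
by rewrite (UmatP Uh).1 //; move: nij le; rewrite -val_eqE /=; lia.
Qed.

(* Conjugating lastcol (r e_j) by h in the inertia group multiplies it by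
   central (h_{0j} r); comparing the values of 'chi_b shows zchar b kills it. *)
Lemma inertia_Cpsi b h : h \in H -> ('chi[Blast]_b ^ h)%CF = 'chi_b -> h \in Cpsi b.
Proof.
move=> Hh Ih; have Uh : h \in U by apply: (subsetP Hei_Umat).
apply/CpsiP; split=> [|j r j0 jk]; first exact: (subsetP hHG).
set v := r *: ecol j.
have v0 : v il 0 = 0.
  by rewrite !mxE (_ : il == j = false) ?mulr0 //; apply/negbTE; rewrite -val_eqE /=; lia.
have nBh : h \in 'N(Blast)%g by apply: (subsetP (normal_norm Blast_normal)).
have := cfConjgE 'chi[Blast]_b (lastcol v) nBh.
rewrite Ih conjgE invgK mulgA Umat_lastcol // mulgK.
have -> : GLval h *m v = v + (GLval h i0 j * r) *: e0.
  by rewrite /v -scalemxAr Hei_col // scalerDr scalerA mulrC.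
rewrite -(lastcolD v0 (e0Z_il _)) -/(central _).
rewrite lin_charM ?Blast_linear ?(lastcol_Blast v0) ?central_Blast // => e.
apply: (mulfI (lin_char_neq0 (Blast_linear b) (lastcol_Blast v0))).
by rewrite mulr1 -e.
Qed.

Lemma Cpsi_mulHei b : (Cpsi b * H)%g = G.
Proof.
apply/eqP; rewrite eqEsubset mul_subG ?Cpsi_sub //=.
apply/subsetP=> g Gg; have Ug : g \in U by apply: (subsetP hGU).
pose a : 'rV[R]_n := \row_j (if (0 < j)%N && (j < k.+1)%N then GLval g i0 j else 0).
have a0 : a 0 i0 = 0 by rewrite mxE.
have na0 : (- a) 0 i0 = 0 by rewrite mxE a0 oppr0.
have -> : g = (g * firstrow (- a) * firstrow a)%g.
  by rewrite -mulgA firstrowD // addNr firstrow0 mulg1.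
apply: mem_mulg; last by rewrite hH firstrow_Hei.
apply/CpsiP; split=> [|j r j0 jk]; first by rewrite groupM ?firstrow_in.
rewrite GL_MxE firstrowE // mulmxDr mulmx1 mulmxA Umat_e0 // !mxE big_ord1 !mxE eqxx /=.
by rewrite j0 jk /= mul1r addrN mul0r zchar0.
Qed.

Lemma index_Cpsi b : #|H : H :&: Cpsi b|%g = #|G : Cpsi b|%g.
Proof.
have mulCH := mul_cardG (Cpsi b) H; rewrite Cpsi_mulHei setIC in mulCH.
apply/eqP; rewrite -(eqn_pmul2l (cardG_gt0 (Cpsi b))).
rewrite -(eqn_pmul2l (cardG_gt0 (H :&: Cpsi b)%G)) /=.
by rewrite mulnCA (Lagrange (subsetIl H (Cpsi b))) mulCH -(Lagrange (Cpsi_sub b)) mulnC mulnA.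
Qed.

Lemma cfclass_Blast_vals b (th : 'CF(Blast)) s : th \in ('chi[Blast]_b ^: H)%CF ->
  th 1%g = 1 /\ th (central s) = zchar b s.
Proof.
case/cfclassP=> y Hy ->; split; first by rewrite cfConjg1 lin_char1 ?Blast_linear.
have nBy : y \in 'N(Blast)%g by apply: (subsetP (normal_norm Blast_normal)).
have Uy : y \in U by apply: (subsetP Hei_Umat).
by rewrite cfConjgE // conjgE invgK mulgA central_Umat // mulgK.
Qed.

Definition Bconstt (i : Iirr H) : Iirr Blast := sval (constt_cfRes_irr Blast i).

Lemma BconsttP i : Bconstt i \in irr_constt ('Res[Blast] 'chi[H]_i).
Proof. exact: svalP (constt_cfRes_irr Blast i). Qed.

Lemma cfRes_Clifford i (x : gT) :
  'Res[Blast] 'chi[H]_i x = '['Res[Blast] 'chi[H]_i, 'chi_(Bconstt i)] *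
    \sum_(th <- ('chi[Blast]_(Bconstt i) ^: H)%CF) th x.
Proof.
by rewrite {1}(Clifford_Res_sum_cfclass Blast_normal (BconsttP i)) cfunE sum_cfunE.
Qed.

Lemma irr_central i s : 'chi[H]_i (central s) = 'chi[H]_i 1%g * zchar (Bconstt i) s.
Proof.
rewrite -(cfResE _ Blast_sub (central_Blast s)) -(cfResE _ Blast_sub (group1 _)).
rewrite !cfRes_Clifford; set Bi := ('chi[Blast]_(Bconstt i) ^: H)%CF.
have -> : \sum_(th <- Bi) th (central s) = (\sum_(th <- Bi) th 1%g) * zchar (Bconstt i) s.
  rewrite mulr_suml; apply: eq_big_seq => th /(cfclass_Blast_vals s)[-> ->].
  by rewrite mul1r.
by rewrite mulrA.
Qed.

Lemma index_Cpsi_le_irr1 i : (#|G : Cpsi (Bconstt i)|%g)%:R <= 'chi[H]_i 1%g.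
Proof.
set b := Bconstt i.
have irr1E : 'chi[H]_i 1%g = '['Res[Blast] 'chi[H]_i, 'chi_b] *
    (#|H : H :&: inertia 'chi[Blast]_b|%g)%:R.
  rewrite -(cfResE _ Blast_sub (group1 _)) cfRes_Clifford -size_cfclass; congr (_ * _).
  rewrite -sum1_size natr_sum; apply: eq_big_seq => th Hth.
  by have [-> _] := cfclass_Blast_vals 0 Hth.
rewrite irr1E; apply: le_trans (ler_peMl _ _); last 2 first.
- exact: ler0n.
- have := BconsttP i; rewrite inE.
  have [m ->] := natrP (Cnat_cfdot_char_irr b (cfRes_char Blast (irr_char i))).
  by rewrite pnatr_eq0 ler1n lt0n.
rewrite ler_nat -index_Cpsi; apply: dvdn_leq; first exact: indexg_gt0.
apply: indexgS; apply/subsetP=> h /setIP[Hh Ih]; rewrite inE Hh /=.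
exact/inertia_Cpsi/inertiaJ.
Qed.

Section InducedFaithful.
Variables (d : nat) (rho : mx_representation algC H d).
Hypothesis frho : mx_faithful rho.
Local Notation chi := (cfRepr rho).

Definition theta : 'CF(G) := \sum_(i in irr_constt chi) 'Ind[G] (lambda (Bconstt i)).

Lemma theta_char : theta \is a character.
Proof. by apply: rpred_sum => i _; apply/cfInd_char/lambda_char. Qed.

Lemma theta1_le : theta 1%g <= d%:R.
Proof.
rewrite -(cfRepr1 rho) [chi]cfun_sum_constt !sum_cfunE.
apply: ler_sum => i Ci; rewrite cfInd1 ?Cpsi_sub // lambda1 mulr1 cfunE.
apply: le_trans (index_Cpsi_le_irr1 i) _; apply: ler_peMl; first exact/char1_ge0/irr_char.
move: Ci; rewrite inE; have [m ->] := natrP (Cnat_cfdot_char_irr i (cfRepr_char rho)).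
by rewrite pnatr_eq0 ler1n lt0n.
Qed.

(* If central s is in the kernel of theta, each lambda (Bconstt i) is trivial at
   it, so every irreducible constituent of chi, hence chi, is trivial at it. *)
Lemma cfker_theta_central s : central s \in cfker theta -> s = 0.
Proof.
move=> Ks.
have Ki := cfker_sum_char (fun i _ => cfInd_char G (lambda_char (Bconstt i))) Ks.
have zchar1 i : i \in irr_constt chi -> zchar (Bconstt i) s = 1.
  move=> Ci; have := Ki i Ci.
  rewrite cfker_Ind ?Cpsi_sub ?lambda_char ?lambda_neq0 // => /(subsetP (gcore_sub _ _)) Kl.
  have Cs : central s \in Cpsi (Bconstt i) := subsetP (cfker_sub _) _ Kl.
  by have := cfker1 Kl; rewrite lambdaE // lambda1 central_corner.
have Hs : central s \in H by apply: (subsetP Blast_sub); apply: central_Blast.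
have : central s \in cfker chi.
  rewrite cfkerEchar ?cfRepr_char // inE Hs /=; apply/eqP.
  rewrite {1 2}[chi]cfun_sum_constt !sum_cfunE; apply: eq_bigr => i Ci.
  by rewrite !cfunE irr_central zchar1 // mulr1.
rewrite cfker_repr => /(subsetP frho); rewrite inE => /eqP s1.
by rewrite -(central_corner k s) s1 GL_1E mxE eq_sym (negbTE il_neq0).
Qed.

Lemma faithful_rep_overgroup : has_faithful_rep G d.
Proof.
apply: (has_faithful_rep_char theta_char _ theta1_le).
exact: (normal_trivial (cfker_normal theta) cfker_theta_central).
Qed.

End InducedFaithful.

End HeisenbergOvergroup.

Theorem theorem1p2 (R : finComUnitRingType) (pi : R) (k : nat)
  (hR : chain_ring_unif pi) (h2 : (2%:R : R) \is a GRing.unit) (hk : (1 <= k)%N)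
  (H G : {group {'GL_k.+2[R]}}) (hH : H :=: Hei R k)
  (hHG : H \subset G) (hGU : G \subset Umat R k.+1) :
  m_faithful G = m_faithful H.
Proof.
apply/eqP; rewrite eqn_leq; apply/andP; split.
  have [rho frho] := m_faithfulP H.
  exact/m_faithful_min/(faithful_rep_overgroup hH hHG hGU frho).
exact/m_faithful_min/(has_faithful_rep_sub hHG)/m_faithfulP.
Qed.
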